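(* Let $G$ be a weighted graph as in the context. For every integer $m\geq1$, \[(q^G_m(x)-q^G_m(y))^2\leq \frac{12R_G(x,y)h_G^{-1}(\lceil m/2\rceil)}{m^2},\qquad\forall x,y\in V(G).\]
   Context: $G$ is a locally finite connected graph with at least two vertices, vertex set $V(G)$ and distinguished vertex $\rho=\rho(G)$; $\mu^G$ is a symmetric weight with $\mu^G_{xy}>0$ iff $\{x,y\}$ is an edge, $\mu^G_x:=\sum_y\mu^G_{xy}$, $\nu^G(A):=\sum_{x\in A}\mu^G_x$. The discrete time simple random walk $X^G$ has transition probabilities $P_G(x,y)=\mu^G_{xy}/\mu^G_x$ and law $\mathbf{P}^G_x$; $p^G_m(x,y):=\mathbf{P}^G_x(X^G_m=y)/\nu^G(\{y\})$, $q^G_m(x,y):=\frac12(p^G_m(x,y)+p^G_{m+1}(x,y))$, $q^G_m(x):=q^G_m(\rho,x)$. The generator is $\mathcal{L}_Gf(x)=\sum_yP_G(x,y)(f(y)-f(x))$, $(f,g)_G:=\sum_xf(x)g(x)\nu^G(\{x\})$, $\mathcal{E}_G(f,g):=-(\mathcal{L}_Gf,g)_G$, $\mathcal{F}_G:=\{f:\mathcal{E}_G(f,f)<\infty\}$. The resistance metric is \[R_G(x,y):=\sup\left\{\frac{|f(x)-f(y)|^2}{\mathcal{E}_G(f,f)}:f\in\mathcal{F}_G,\ \mathcal{E}_G(f,f)>0\right\}.\] Set $V_G(r):=\nu^G(\{x:R_G(\rho,x)\le r\})$, $h_G(r):=rV_G(r)$, and $h_G^{-1}(m):=\sup\{r:h_G(r)\le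 m\}$. *)

From HB Require Import structures.
From mathcomp Require Import all_boot all_order all_algebra.
From mathcomp Require Import all_classical all_reals all_analysis.
Set Implicit Arguments. Unset Strict Implicit. Unset Printing Implicit Defensive.
Import Order.TTheory GRing.Theory Num.Theory.
Local Open Scope classical_set_scope.
Local Open Scope ring_scope.

Section WGraph.
Variables (R : realType) (V : choiceType).
(* mu : symmetric edge weights; N x : the (finite, duplicate-free) list of
   neighbours of x, i.e. of the y with mu x y > 0. *)
Variables (mu : V -> V -> R) (N : V -> seq V).

Definition is_wgraph : Prop :=
  (forall x y, mu x y = mu y x) /\
  (forall x y, 0 <= mu x y) /\
  (forall x y, (0 < mu x y) <-> (y \in N x)) /\
  (forall x, uniq (N x)) /\
  (forall x, mu x x = 0) /\
  (forall x y, exists p : seq V,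
      path (fun a b => b \in N a) x p /\ last x p = y) /\
  (exists x y : V, x <> y).

Definition muv (x : V) : R := \sum_(y <- N x) mu x y.

Definition Ptrans (x y : V) : R := mu x y / muv x.

Fixpoint Pstep (m : nat) (x y : V) : R :=
  match m with
  | 0%N => if x == y then 1 else 0
  | m'.+1 => \sum_(z <- N x) Ptrans x z * Pstep m' z y
  end.

Definition pker (m : nat) (x y : V) : R := Pstep m x y / muv y.

Definition qker (m : nat) (x y : V) : R := (pker m x y + pker m.+1 x y) / 2.

Definition energy (f : V -> R) : \bar R :=
  (2^-1)%:E * \esum_(x in [set: V]) (\sum_(y <- N x) mu x y * (f x - f y) ^+ 2)%:E.

Definition resist (x y : V) : \bar R :=
  ereal_sup [set ((f x - f y) ^+ 2 / fine (energy f))%:E |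
                 f in [set f : V -> R | (energy f < +oo)%E /\ (0 < energy f)%E]].

Definition volG (rho : V) (r : R) : \bar R :=
  \esum_(x in [set x | (resist rho x <= r%:E)%E]) (muv x)%:E.

Definition hG (rho : V) (r : R) : \bar R := (r%:E * volG rho r)%E.

Definition hGinv (rho : V) (m : R) : \bar R :=
  ereal_sup [set r%:E | r in [set r : R | (hG rho r <= m%:E)%E]].

End WGraph.

(** Write u_n := p_n(rho, .), a heat kernel supported on the ball of graph radius n
    around rho. Reversibility makes P self-adjoint for the measure nu, so
    <u_i, u_j> = u_(i+j)(rho) =: a_(i+j), and every quadratic expression in the
    u_n is a quadratic form in the return probabilities a. In particular
    q_m = (u_m + u_(m+1))/2 has energy (c_m - c_(m+1))/2 with
    c_n := (a_(2n) + a_(2n+1))/2, and the sequence c is nonnegative and convex.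
    The resistance inequality gives (q_m x - q_m y)^2 <= R(x,y) E(q_m).
    To bound E(q_m), take r with h_G(r) > M := ceil(m/2): since q_(2M-2) has
    mass 1, it is at most M/r somewhere on the resistance ball of radius r, and
    the resistance inequality between rho and that point bounds c_(M-1) by
    O(r/M). Convexity spreads this over the m - M + 2 decrements of c between
    M - 1 and m, whence E(q_m) <= 5 r / m^2. *)
From Pilot Require Import Defs.
From HB Require Import structures.
From mathcomp Require Import all_boot all_order all_algebra.
From mathcomp Require Import all_classical all_reals all_analysis.
From mathcomp Require Import ring lra zify.
Import Order.TTheory GRing.Theory Num.Theory.
Local Open Scope classical_set_scope.
Local Open Scope ring_scope.

Section SeqSums.
Variables (R : numDomainType) (T : eqType).

Lemma big_uniq_eq_support (A B : seq T) (h : T -> R) : uniq A -> uniq B ->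
  (forall y, h y != 0 -> (y \in A) && (y \in B)) ->
  \sum_(y <- A) h y = \sum_(y <- B) h y.
Proof.
move=> uA uB hAB.
have restrict (C D : seq T) : (forall y, h y != 0 -> y \in D) ->
    \sum_(y <- C) h y = \sum_(y <- [seq y <- C | y \in D]) h y.
  move=> hD; rewrite big_filter [LHS](bigID (mem D)) /= [X in _ + X]big1 ?addr0 //.
  by move=> y yD; apply/eqP; apply: contraNT yD => /hD.
rewrite (restrict A B) => [|y /hAB /andP[]//].
rewrite [RHS](restrict B A) => [|y /hAB /andP[]//].
apply: perm_big; apply: uniq_perm; rewrite ?filter_uniq //.
by move=> y; rewrite !mem_filter andbC.
Qed.

Lemma big_seq_delta (s : seq T) (F : T -> R) x : uniq s ->
  (forall y, y \notin s -> F y = 0) ->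
  \sum_(y <- s) (if y == x then F y else 0) = F x.
Proof.
move=> us hs; rewrite (@big_uniq_eq_support s [:: x]) ?big_seq1 ?eqxx //.
move=> y; have [->|] := eqVneq y x; last by rewrite eqxx.
by rewrite mem_seq1 eqxx andbT; apply: contraR => /hs ->.
Qed.

End SeqSums.

Lemma esum_seq_support (R : realType) (T : choiceType) (L : seq T) (h : T -> R) :
  uniq L -> (forall x, 0 <= h x) -> (forall x, x \notin L -> h x = 0) ->
  \esum_(x in [set: T]) (h x)%:E = (\sum_(x <- L) h x)%:E.
Proof.
move=> uL h0 hL.
rewrite -sumEFin (fsbig_seq _ _ uL) -esum_fset; last 2 first.
- exact: finite_seq.
- by move=> i _; rewrite lee_fin.
rewrite [RHS]esum_mkcond; apply: eq_esum => x _.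
by case: ifPn => // xL; rewrite hL //; apply: contra xL; rewrite inE.
Qed.

Lemma sqr_sub_le_bound (R : realFieldType) (C f t b : R) :
  0 <= b -> 0 <= C -> 0 <= f -> f <= t -> (C - f) ^+ 2 <= b * C -> C <= 2 * t + b.
Proof.
move=> b0 C0 f0 ft hC; have [Ct|tC] := lerP C t; first lra.
have : (C - t) ^+ 2 <= b * C by apply: le_trans hC; rewrite ler_sqr ?nnegrE; lra.
nra.
Qed.

Section WeightedGraph.
Variables (R : realType) (V : choiceType) (mu : V -> V -> R) (N : V -> seq V).
Hypothesis HG : is_wgraph mu N.

Local Notation muv := (muv mu N).
Local Notation Ptrans := (Ptrans mu N).
Local Notation Pstep := (Pstep mu N).

Lemma mu_sym x y : mu x y = mu y x. Proof. by case: HG. Qed.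
Lemma mu_ge0 x y : 0 <= mu x y. Proof. by case: HG => _ []. Qed.
Lemma mu_gt0E x y : (0 < mu x y) <-> (y \in N x). Proof. by case: HG => _ [] _ []. Qed.
Lemma N_uniq x : uniq (N x). Proof. by case: HG => _ [] _ [] _ []. Qed.
Lemma mu_diag x : mu x x = 0. Proof. by case: HG => _ [] _ [] _ [] _ []. Qed.

Lemma N_connected x y : exists p, path (fun a b => b \in N a) x p /\ last x p = y.
Proof. by case: HG => _ [] _ [] _ [] _ [] _ []. Qed.

Lemma mu_neq0_N x y : mu x y != 0 -> y \in N x.
Proof. by move=> h; apply/mu_gt0E; rewrite lt_neqAle eq_sym h mu_ge0. Qed.

Lemma mu_notin_N x y : y \notin N x -> mu x y = 0.
Proof. by move=> h; apply/eqP; apply: contraNT h; apply: mu_neq0_N. Qed.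

Lemma N_sym x y : (y \in N x) = (x \in N y).
Proof. by apply/idP/idP => /mu_gt0E h; apply/mu_gt0E; rewrite mu_sym. Qed.

Lemma muv_gt0 x : 0 < muv x.
Proof.
have [y yx] : exists y, y != x.
  case: HG => _ [] _ [] _ [] _ [] _ [] _ [x0 [y0 /eqP x0y0]].
  by have [<-|] := eqVneq x0 x; [exists y0; rewrite eq_sym | exists x0].
have [[|b p] [/= + lp]] := N_connected x y; first by rewrite lp eqxx in yx.
case/andP => bN _.
rewrite /Defs.muv (bigD1_seq b) ?N_uniq //= ltr_wpDr ?(proj2 (mu_gt0E x b)) //.
by apply: sumr_ge0 => i _; apply: mu_ge0.
Qed.

Lemma muv_neq0 x : muv x != 0. Proof. by rewrite gt_eqF // muv_gt0. Qed.

Lemma Ptrans_ge0 x y : 0 <= Ptrans x y.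
Proof. by rewrite divr_ge0 // ?mu_ge0 // ltW // muv_gt0. Qed.

Lemma PtransK x y : Ptrans x y * muv x = mu x y.
Proof. by rewrite divfK // muv_neq0. Qed.

Lemma Pstep_ge0 n x y : 0 <= Pstep n x y.
Proof.
elim: n x => [|n IH] x /=; first by case: eqP.
by apply: sumr_ge0 => z _; rewrite mulr_ge0 ?Ptrans_ge0.
Qed.

Lemma PstepS n x y :
  Pstep n.+1 x y = \sum_(z <- N x) Ptrans x z * Pstep n z y.
Proof. by []. Qed.

Lemma PstepSr n y x :
  Pstep n.+1 y x = \sum_(z <- N x) Pstep n y z * Ptrans z x.
Proof.
elim: n y => [|n IH] y.
  have notN z (w : V) : w \notin N z -> Ptrans z w = 0.
    by move=> wN; rewrite /Defs.Ptrans mu_notin_N // mul0r.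
  transitivity (Ptrans y x); rewrite /=.
    rewrite -(@big_seq_delta _ _ (N y) (Ptrans y) x) ?N_uniq //; last exact: notN.
    by apply: eq_bigr => z _; case: eqP; rewrite ?mulr1 ?mulr0.
  rewrite -(@big_seq_delta _ _ (N x) (Ptrans ^~ x) y) ?N_uniq //; last first.
    by move=> w; rewrite -N_sym; apply: notN.
  apply: eq_bigr => z _ /=; rewrite eq_sym; by case: eqP; rewrite ?mul1r ?mul0r.
rewrite PstepS; under eq_bigr do rewrite IH big_distrr /=.
rewrite exchange_big /=; apply: eq_bigr => z _.
by rewrite big_distrl /=; apply: eq_bigr => w _; rewrite mulrA.
Qed.

Lemma muv_Pstep_sym n x y : muv x * Pstep n x y = muv y * Pstep n y x.
Proof.
elim: n x y => [|n IH] x y.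
  by rewrite /= eq_sym; case: eqP => [->|]; rewrite ?mulr0.
rewrite PstepS PstepSr !big_distrr /=; apply: eq_bigr => z _.
have -> : Pstep n z y = muv y * Pstep n y z / muv z by rewrite -IH; field; apply: muv_neq0.
by rewrite /Defs.Ptrans (mu_sym x z); field; rewrite !muv_neq0.
Qed.

Variable rho : V.

Fixpoint ball n : seq V :=
  if n is n'.+1 then undup (ball n' ++ flatten [seq N x | x <- ball n'])
  else [:: rho].

Definition supported n (f : V -> R) := forall z, z \notin ball n -> f z = 0.

Lemma ball_uniq n : uniq (ball n).
Proof. by case: n => [|n] //=; rewrite undup_uniq. Qed.

Lemma ball_subS {n x} : x \in ball n -> x \in ball n.+1.
Proof. by move=> h; rewrite /= mem_undup mem_cat h. Qed.

Lemma ball_N {n x y} : x \in ball n -> y \in N x -> y \in ball n.+1.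
Proof.
move=> hx hy; rewrite /= mem_undup mem_cat; apply/orP; right.
by apply/flatten_mapP; exists x.
Qed.

Lemma ball_mono i j x : (i <= j)%N -> x \in ball i -> x \in ball j.
Proof.
move=> /subnK <-; elim: (j - i)%N => [|d IH] // h.
by rewrite addSn; apply: ball_subS; apply: IH.
Qed.

Lemma rho_ball n : rho \in ball n.
Proof. by apply: (@ball_mono 0); rewrite ?mem_seq1. Qed.

Lemma supported_mono i j f : (i <= j)%N -> supported i f -> supported j f.
Proof. by move=> ij h z zj; apply: h; apply: contra zj; apply: ball_mono. Qed.

Definition Pop (f : V -> R) x := \sum_(y <- N x) Ptrans x y * f y.
Definition dotB K (f g : V -> R) := \sum_(x <- ball K) f x * g x * muv x.
Definition lincomb (a : R) f (b : R) g := fun z : V => a * f z + b * g z.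

(* kern n = p_n(rho, .), by reversibility *)
Definition kern n z := Pstep n z rho / muv rho.

Lemma kernS n : kern n.+1 = Pop (kern n).
Proof.
apply: funext => x; rewrite /kern /Pop PstepS big_distrl /=.
by apply: eq_bigr => y _; rewrite mulrA.
Qed.

Lemma kern_ge0 n x : 0 <= kern n x.
Proof. by rewrite divr_ge0 ?Pstep_ge0 // ltW // muv_gt0. Qed.

Lemma kern_supported n : supported n (kern n).
Proof.
elim: n => [|n IH] z zn.
  rewrite /kern /=; case: eqP => [e|]; last by rewrite mul0r.
  by move: zn; rewrite e mem_seq1 eqxx.
rewrite kernS /Pop big1_seq // => y /andP[_ yN].
have [yb|/IH ->] := boolP (y \in ball n); last by rewrite mulr0.
by move: zn; rewrite (ball_N yb) // -N_sym.
Qed.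

Lemma supported_lincomb K a f b g :
  supported K f -> supported K g -> supported K (lincomb a f b g).
Proof. by move=> sf sg z zK; rewrite /lincomb sf ?sg // !mulr0 addr0. Qed.

Lemma supported_kern2 K a i b j : (i <= K)%N -> (j <= K)%N ->
  supported K (lincomb a (kern i) b (kern j)).
Proof.
by move=> iK jK; apply: supported_lincomb; apply: supported_mono (kern_supported _).
Qed.

Lemma PopM f x : Pop f x * muv x = \sum_(y <- N x) mu x y * f y.
Proof. by rewrite /Pop big_distrl /=; apply: eq_bigr => y _; rewrite mulrAC PtransK. Qed.

Lemma Pop_lincomb a f b g : Pop (lincomb a f b g) = lincomb a (Pop f) b (Pop g).
Proof.
apply: funext => x; rewrite /Pop /lincomb !big_distrr -big_split /=.
by apply: eq_bigr => y _; ring.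
Qed.

Lemma dotB_lincomb K a1 f1 b1 g1 a2 f2 b2 g2 :
  dotB K (lincomb a1 f1 b1 g1) (lincomb a2 f2 b2 g2) =
  a1 * a2 * dotB K f1 f2 + a1 * b2 * dotB K f1 g2 +
  b1 * a2 * dotB K g1 f2 + b1 * b2 * dotB K g1 g2.
Proof.
by rewrite /dotB /lincomb !big_distrr -!big_split /=; apply: eq_bigr => x _; ring.
Qed.

Lemma sum_N_ball K (F : V -> V -> R) : (forall x y, F x y != 0 -> y \in ball K) ->
  \sum_(x <- ball K) \sum_(y <- N x) mu x y * F x y =
  \sum_(x <- ball K) \sum_(y <- ball K) mu x y * F x y.
Proof.
move=> hF; apply: eq_bigr => x _; apply: big_uniq_eq_support.
- exact: N_uniq.
- exact: ball_uniq.
by move=> y; rewrite mulf_eq0 negb_or => /andP[/mu_neq0_N -> /hF ->].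
Qed.

Lemma dotB_Pop_sym K f g : supported K f -> supported K g ->
  dotB K (Pop f) g = dotB K f (Pop g).
Proof.
have dotB_PopE f' g' : supported K f' -> dotB K (Pop f') g' =
    \sum_(x <- ball K) \sum_(y <- ball K) mu x y * (f' y * g' x).
  move=> sf'; rewrite /dotB -sum_N_ball.
    apply: eq_bigr => x _; rewrite mulrAC PopM big_distrl /=.
    by apply: eq_bigr => y _; rewrite mulrA.
  by move=> x y; rewrite mulf_eq0 negb_or => /andP[+ _]; apply: contraNT => /sf' ->.
move=> sf sg; rewrite dotB_PopE //.
transitivity (dotB K (Pop g) f).
  rewrite dotB_PopE // exchange_big /=.
  by apply: eq_bigr => x _; apply: eq_bigr => y _; rewrite mu_sym [f _ * _]mulrC.
by rewrite /dotB; apply: eq_bigr => x _; rewrite (mulrC (f x)).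
Qed.

Lemma sum_delta_rho K (F : V -> R) : (forall x, x != rho -> F x = 0) ->
  \sum_(x <- ball K) F x = F rho.
Proof.
move=> hF; transitivity (\sum_(x <- [:: rho]) F x); last by rewrite big_seq1.
apply: big_uniq_eq_support => //; first exact: ball_uniq.
move=> x; have [->|/hF ->] := eqVneq x rho; last by rewrite eqxx.
by rewrite rho_ball mem_seq1 eqxx.
Qed.

Lemma kern0_neq_rho x : x != rho -> kern 0 x = 0.
Proof. by move=> /negbTE ne; rewrite /kern /= ne mul0r. Qed.

Lemma dotB_kern K i j : (i + j <= K)%N -> dotB K (kern i) (kern j) = kern (i + j) rho.
Proof.
elim: i j => [|i IH] j hij.
  rewrite /dotB sum_delta_rho => [|x /kern0_neq_rho ->]; last by rewrite !mul0r.
  by rewrite /kern /= eqxx; field; apply: muv_neq0.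
rewrite kernS dotB_Pop_sym; try by apply: supported_mono (kern_supported _); lia.
by rewrite -kernS IH ?addnS //; lia.
Qed.

Lemma sum_ball_mu K h : supported K h ->
  \sum_(x <- ball K.+1) \sum_(y <- N x) mu x y * h y =
  \sum_(y <- ball K.+1) muv y * h y.
Proof.
move=> sh; rewrite (@sum_N_ball K.+1 (fun _ y => h y)); last first.
  by move=> x y hy; apply: ball_subS; apply: contraNT hy => /sh ->.
rewrite exchange_big; apply: eq_bigr => y _.
under eq_bigr do rewrite mu_sym.
rewrite -big_distrl /=.
have [yb|/sh ->] := boolP (y \in ball K); last by rewrite !mulr0.
congr (_ * _); rewrite /Defs.muv; apply: big_uniq_eq_support.
- exact: (ball_uniq K.+1).
- exact: N_uniq.
- by move=> x /mu_neq0_N xN; rewrite (ball_N yb xN) xN.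
Qed.

Lemma kern_mass K n : (n <= K)%N -> \sum_(x <- ball K.+1) kern n x * muv x = 1.
Proof.
elim: n => [|n IH] hn.
  rewrite sum_delta_rho => [|x /kern0_neq_rho ->]; last by rewrite mul0r.
  by rewrite /kern /= eqxx; field; apply: muv_neq0.
rewrite kernS; under eq_bigr do rewrite PopM.
rewrite sum_ball_mu; last by apply: supported_mono (kern_supported n); lia.
by rewrite -[RHS]IH 1?ltnW //; apply: eq_bigr => x _; rewrite mulrC.
Qed.

Lemma sum_mu_sqr K s w : s * s = 1 -> supported K w ->
  \sum_(x <- ball K.+1) \sum_(y <- N x) mu x y * (w x + s * w y) ^+ 2 =
  2 * (dotB K.+1 w w + s * dotB K.+1 w (Pop w)).
Proof.
move=> hs sw.
have expand x y : mu x y * (w x + s * w y) ^+ 2 =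
    mu x y * w x ^+ 2 + 2 * s * (w x * (mu x y * w y)) + mu x y * w y ^+ 2.
  transitivity (mu x y * w x ^+ 2 + 2 * s * (w x * (mu x y * w y)) +
    (s * s) * (mu x y * w y ^+ 2)); first by ring.
  by rewrite hs mul1r.
transitivity (\sum_(x <- ball K.+1) (muv x * w x ^+ 2 +
    2 * s * (w x * (Pop w x * muv x))) +
    \sum_(x <- ball K.+1) \sum_(y <- N x) mu x y * w y ^+ 2).
  rewrite -big_split; apply: eq_bigr => x _ /=.
  rewrite PopM big_distrr /= big_distrr /= /Defs.muv big_distrl /= -!big_split /=.
  by apply: eq_bigr => y _; rewrite expand.
rewrite (@sum_ball_mu K (fun y => w y ^+ 2)); last by move=> z /sw ->; rewrite expr0n.
rewrite -big_split /dotB [s * _]big_distrr -big_split big_distrr /=.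
by apply: eq_bigr => x _; ring.
Qed.

Lemma energy_ball K w : supported K w -> energy mu N w =
  (2^-1 * \sum_(x <- ball K.+1) \sum_(y <- N x) mu x y * (w x - w y) ^+ 2)%:E.
Proof.
move=> sw; rewrite /energy (@esum_seq_support _ _ (ball K.+1)) ?EFinM //.
- exact: ball_uniq.
- by move=> x; apply: sumr_ge0 => y _; rewrite mulr_ge0 ?mu_ge0 ?sqr_ge0.
move=> x xn; apply: big1_seq => y /andP[_ yN].
rewrite [w x]sw; last by apply: contra xn; apply: ball_subS.
rewrite [w y]sw ?subrr ?expr0n ?mulr0 //.
by apply: contra xn => yb; apply: (ball_N yb); rewrite -N_sym.
Qed.

Definition a n := kern n rho.

(* <f, (I + s P) f>_nu for f = alpha kern i + beta kern j, expressed through a *)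
Definition quadv s alpha i beta j :=
  alpha ^+ 2 * (a (i + i) + s * a (i + i).+1)
  + 2 * alpha * beta * (a (i + j) + s * a (i + j).+1)
  + beta ^+ 2 * (a (j + j) + s * a (j + j).+1).

Lemma sum_mu_sqr_kern K s alpha i beta j n : s * s = 1 ->
  (i <= n)%N -> (j <= n)%N -> (n + n <= K)%N ->
  \sum_(x <- ball K.+1) \sum_(y <- N x) mu x y *
     (lincomb alpha (kern i) beta (kern j) x +
      s * lincomb alpha (kern i) beta (kern j) y) ^+ 2 =
  2 * quadv s alpha i beta j.
Proof.
move=> hs hi hj hK.
rewrite sum_mu_sqr //; last by apply: supported_kern2; lia.
rewrite Pop_lincomb -!kernS !dotB_lincomb !dotB_kern; try lia.
by rewrite /quadv /a !addnS (addnC j i); ring.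
Qed.

Lemma quadv_ge0 s alpha i beta j : s * s = 1 -> 0 <= quadv s alpha i beta j.
Proof.
move=> hs; set n := maxn i j.
have := @sum_mu_sqr_kern (n + n) s alpha i beta j n hs
  (leq_maxl _ _) (leq_maxr _ _) (leqnn _).
rewrite -(@pmulr_rge0 _ 2) ?ltr0n // => <-.
by do 2!apply: sumr_ge0 => ? _; rewrite mulr_ge0 ?mu_ge0 ?sqr_ge0.
Qed.

Lemma energy_kern2 alpha i beta j :
  energy mu N (lincomb alpha (kern i) beta (kern j)) = (quadv (-1) alpha i beta j)%:E.
Proof.
set n := maxn i j.
rewrite (@energy_ball (n + n)); last by apply: supported_kern2; lia.
have h2 : (2 : R) != 0 by rewrite pnatr_eq0.
rewrite -[quadv _ _ _ _ _](mulKf h2) -(@sum_mu_sqr_kern (n + n) (-1) alpha i beta j n);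
  rewrite ?mulN1r ?opprK ?leq_maxl ?leq_maxr //.
by congr ((_ * _)%:E); do 2!(apply: eq_bigr => ? _); rewrite mulN1r.
Qed.

Definition c n := (a (n + n) + a (n + n).+1) / 2.

Definition qf n := lincomb (2^-1) (kern n) (2^-1) (kern n.+1).

Lemma energy_qf m : energy mu N (qf m) = ((c m - c m.+1) / 2)%:E.
Proof. by rewrite energy_kern2 /quadv /c !addnS !addSn; congr (_%:E); ring. Qed.

Lemma energy_qf_ge0 m : 0 <= (c m - c m.+1) / 2.
Proof.
have hs : (-1 : R) * -1 = 1 by rewrite mulrNN mulr1.
have := @quadv_ge0 (-1) (2^-1) m (2^-1) m.+1 hs.
by rewrite /quadv /c !addnS !addSn; lra.
Qed.

(* quadv 1 1 n (-1) (n+2) >= 0 unfolds to the second difference of c *)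
Lemma c_convex n : 0 <= c n - 2 * c n.+1 + c n.+2.
Proof.
have := @quadv_ge0 1 1 n (-1) n.+2 (mulr1 1).
by rewrite /quadv /c !addnS !addSn; nra.
Qed.

Lemma c_ge0 n : 0 <= c n.
Proof. by rewrite divr_ge0 ?addr_ge0 ?kern_ge0. Qed.

Lemma qf_ge0 n x : 0 <= qf n x.
Proof. by rewrite /qf /lincomb addr_ge0 // mulr_ge0 ?kern_ge0 // invr_ge0 ler0n. Qed.

Lemma qf_rho k : qf (k + k) rho = c k.
Proof. by rewrite /qf /lincomb /c /a; field. Qed.

Lemma qf_supported n : supported n.+1 (qf n).
Proof. by apply: supported_kern2. Qed.

Lemma qf_mass K n : (n.+1 <= K)%N -> \sum_(x <- ball K.+1) qf n x * muv x = 1.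
Proof.
move=> hn; transitivity (2^-1 * \sum_(x <- ball K.+1) kern n x * muv x +
  2^-1 * \sum_(x <- ball K.+1) kern n.+1 x * muv x).
  by rewrite !big_distrr -big_split; apply: eq_bigr => x _; rewrite /qf /lincomb /=; ring.
by rewrite !kern_mass ?(ltnW hn) //; field.
Qed.

Lemma qker_qf m x : qker mu N m rho x = qf m x.
Proof.
have pker_kern n : pker mu N n rho x = kern n x.
  by rewrite /pker /kern; apply/eqP; rewrite eqr_div ?muv_neq0 // mulrC muv_Pstep_sym mulrC.
by rewrite /qker /qf /lincomb !pker_kern; field.
Qed.

Lemma energy_eq0_const f : energy mu N f = 0%:E -> forall x y, f x = f y.
Proof.
move=> h0.
have summand_ge0 x y : 0 <= mu x y * (f x - f y) ^+ 2.
  by rewrite mulr_ge0 ?mu_ge0 ?sqr_ge0.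
have term_eq0 x : \sum_(y <- N x) mu x y * (f x - f y) ^+ 2 = 0.
  apply/eqP; rewrite eq_le [0 <= _]sumr_ge0 ?andbT => [|y _]; last exact: summand_ge0.
  have : \esum_(x in [set: V]) (\sum_(y <- N x) mu x y * (f x - f y) ^+ 2)%:E = 0.
    move: h0; rewrite /energy => /eqP; rewrite mule_eq0 => /orP[|/eqP //].
    by rewrite eqe invr_eq0 pnatr_eq0.
  rewrite -lee_fin (_ : 0%:E = 0) // => <-; apply: esum_ge; exists [set x]; first by split.
  by rewrite fsbig_set1.
have edge_eq x y : y \in N x -> f x = f y.
  move=> yN; move: (term_eq0 x); rewrite (bigD1_seq y) ?N_uniq //=.
  have rest_ge0 : 0 <= \sum_(z <- N x | z != y) mu x z * (f x - f z) ^+ 2.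
    by apply: sumr_ge0 => z _; apply: summand_ge0.
  move/eqP; rewrite paddr_eq0 ?summand_ge0 // => /andP[+ _].
  rewrite mulf_eq0 (gt_eqF (proj2 (mu_gt0E x y) yN)) sqrf_eq0 subr_eq0.
  by move=> /eqP.
move=> x y; have [p [pp <-]] := N_connected x y.
by elim: p x pp => [|b p IH] x //= /andP[bN pp]; rewrite (edge_eq x b bN) IH.
Qed.

Lemma resist_energy f e x y : energy mu N f = e%:E -> 0 <= e ->
  (((f x - f y) ^+ 2)%:E <= resist mu N x y * e%:E)%E.
Proof.
move=> he; rewrite le_eqVlt => /orP[/eqP e0|e0].
  by rewrite -e0 mule0 (@energy_eq0_const f _ x y) ?subrr ?expr0n // he -e0.
rewrite -[(f x - f y) ^+ 2](@divfK _ e) ?(gt_eqF e0) // EFinM.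
apply: lee_wpmul2r; first by rewrite lee_fin ltW.
apply: ereal_sup_ubound; exists f; last by rewrite he.
by split; rewrite he ?ltry ?lte_fin.
Qed.

Lemma resist_ge0 x y : (0 <= resist mu N x y)%E.
Proof.
set f := lincomb 1 (kern 0) 0 (kern 0).
have a1_eq0 : a 1 = 0.
  rewrite /a /kern.
  have -> : Pstep 1 rho rho = Ptrans rho rho.
    rewrite -(@big_seq_delta _ _ (N rho) (Ptrans rho) rho) ?N_uniq //=.
      by apply: eq_bigr => z _; case: eqP; rewrite ?mulr1 ?mulr0.
    by move=> w wN; rewrite /Defs.Ptrans mu_notin_N // mul0r.
  by rewrite /Defs.Ptrans mu_diag !mul0r.
have a0_gt0 : 0 < a 0 by rewrite /a /kern /= eqxx mul1r invr_gt0 muv_gt0.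
have ef : energy mu N f = (a 0)%:E.
  by rewrite energy_kern2 /quadv a1_eq0 /=; congr (_%:E); ring.
apply: (@le_trans _ _ (((f x - f y) ^+ 2 / a 0))%:E).
  by rewrite lee_fin divr_ge0 ?sqr_ge0 // ltW.
apply: ereal_sup_ubound; exists f; last by rewrite ef.
by split; rewrite ef ?ltry ?lte_fin.
Qed.

Lemma c_decr_mono k n : c (k + n) - c (k + n).+1 <= c k - c k.+1.
Proof.
elim: n k => [|n IH] k; first by rewrite addn0.
by have := IH k.+1; have := c_convex k; rewrite !addSn !addnS; lra.
Qed.

Lemma c_decr_sum k n : n.+1%:R * (c (k + n) - c (k + n).+1) <= c k - c (k + n).+1.
Proof.
elim: n k => [|n IH] k; first by rewrite addn0 mul1r.
have := IH k.+1; have := c_decr_mono k n.+1.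
by rewrite -[n.+2%:R]natr1 !addSn !addnS; lra.
Qed.

(* Markov's inequality for the probability measure qf n * nu *)
Lemma qf_small_in_ball n r t : 0 < t -> ((t^-1)%:E < volG mu N rho r)%E ->
  exists2 z, (resist mu N rho z <= r%:E)%E & qf n z <= t.
Proof.
move=> t0 hvol; apply: contrapT => hno; move: hvol; apply/negP; rewrite -leNgt.
have qf_gt z : (resist mu N rho z <= r%:E)%E -> t < qf n z.
  by move=> hz; rewrite ltNge; apply/negP => fz; apply: hno; exists z.
have w_ge0 x : 0 <= qf n x * muv x / t by rewrite !mulr_ge0 ?qf_ge0 ?invr_ge0 ?ltW ?muv_gt0.
apply: (@le_trans _ _ (\esum_(x in [set: V]) (qf n x * muv x / t)%:E)).
  apply: (@le_trans _ _ (\esum_(x in [set x | (resist mu N rho x <= r%:E)%E])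
                           (qf n x * muv x / t)%:E)).
    apply: le_esum => x /= hx; rewrite lee_fin ler_pdivlMr // (mulrC (qf n x)).
    by rewrite ler_pM2l ?muv_gt0 // ltW // qf_gt.
  rewrite [X in (X <= _)%E]esum_mkcond; apply: le_esum => x _.
  by case: ifP; rewrite ?lee_fin.
rewrite (@esum_seq_support _ _ (ball n.+2)) //; last 2 first.
- exact: ball_uniq.
- by move=> x xb; rewrite qf_supported ?mul0r //; apply: contra xb; apply: ball_subS.
by rewrite -big_distrl qf_mass //= mul1r.
Qed.

Lemma c_le_hG k r M : 0 < M -> (M%:E < hG mu N rho r)%E ->
  c k <= 2 * (r / M) + r / (2 * k.+1%:R).
Proof.
move=> M0 hM.
have vol0 : (0 <= volG mu N rho r)%E.
  by apply: esum_ge0 => x _; rewrite lee_fin ltW // muv_gt0.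
have r0 : 0 < r.
  rewrite ltNge; apply/negP => r0; move: hM; apply/negP; rewrite -leNgt.
  by rewrite /hG (le_trans (mule_le0_ge0 _ _)) ?lee_fin // ltW.
have [z zr qz] : exists2 z, (resist mu N rho z <= r%:E)%E & qf (k + k) z <= r / M.
  apply: qf_small_in_ball; first by rewrite divr_gt0.
  rewrite invf_div -(@lte_pmul2l _ r%:E) ?lte_fin // -EFinM mulrCA divff ?gt_eqF //.
  by rewrite mulr1.
set E := (c (k + k) - c (k + k).+1) / 2.
have E0 : 0 <= E := energy_qf_ge0 (k + k).
have hres : (c k - qf (k + k) z) ^+ 2 <= r * E.
  rewrite -qf_rho -lee_fin [(r * E)%:E]EFinM.
  apply: (le_trans (resist_energy (qf (k + k)) E rho z (energy_qf (k + k)) E0)).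
  by apply: lee_wpmul2r; rewrite ?lee_fin.
have k0 : 0 < 2 * k.+1%:R :> R by rewrite mulr_gt0 ?ltr0n.
apply: (@sqr_sub_le_bound _ _ _ _ _ _ (c_ge0 k) (qf_ge0 _ _) qz).
  by rewrite divr_ge0 ?ltW.
apply: le_trans hres _; rewrite mulrAC ler_pdivlMr // mulrC.
rewrite mulrCA ler_pM2l // /E.
by have := c_decr_sum k k; have := c_ge0 (k + k).+1; lra.
Qed.

Lemma energy_qf_le_hG m r : (0 < m)%N -> ((uphalf m)%:R%:E < hG mu N rho r)%E ->
  (c m - c m.+1) / 2 * (m%:R ^+ 2) <= 5 * r.
Proof.
move=> m0 hr; set M := uphalf m.
have M0 : (0 < M)%N by rewrite /M -(ltn_predK m0) uphalfE.
have M2 : (m <= M + M <= m.+1)%N.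
  by rewrite /M addnn uphalfK; case: odd; rewrite ?leqnn ?leqnSn // andbT.
have Mpos : 0 < M%:R :> R by rewrite ltr0n.
have hC := @c_le_hG M.-1 r M%:R Mpos hr; rewrite prednK // in hC.
have hsum := c_decr_sum M.-1 (m - M.-1).
rewrite (_ : (M.-1 + (m - M.-1) = m)%N) in hsum; last by lia.
have hJ : (m - M.-1).+1%:R = m%:R + 2 - M%:R :> R.
  by apply: (@addIr _ M%:R); rewrite subrK -!natrD; congr _%:R; lia.
rewrite hJ in hsum.
have lo : m%:R <= 2 * M%:R :> R by rewrite -natrM ler_nat; lia.
have hi : 2 * M%:R <= m%:R + 1 :> R by rewrite -natrM -(natrD _ m 1) ler_nat; lia.
have hCM : c M.-1 * M%:R <= 5 / 2 * r.
  rewrite -ler_pdivlMr //; apply: le_trans hC _; rewrite le_eqVlt; apply/orP; left.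
  by apply/eqP; field; rewrite gt_eqF.
have := c_ge0 m.+1; have := energy_qf_ge0 m.
move: hsum hCM lo hi Mpos; set x := M%:R; set y := m%:R; set C := c M.-1.
move=> hsum hCM lo hi Mpos hd hd'; set e := c m - c m.+1 in hsum hd *.
have hm : y ^+ 2 <= 4 * x * (y + 2 - x).
  have : 0 <= (2 * x - y) * (y + 1 - 2 * x) by apply: mulr_ge0; lra.
  have : 0 <= y by rewrite /y ler0n.
  nra.
have : e * y ^+ 2 <= 4 * x * (C - c m.+1) by nra.
nra.
Qed.

Lemma hGinv_ge0 M : (0 <= hGinv mu N rho M%:R)%E.
Proof.
apply: ereal_sup_ubound; exists 0 => //=.
by rewrite /hG (_ : 0%:E = 0) // mul0e lee_fin.
Qed.

Lemma energy_qf_le_hGinv m : (0 < m)%N ->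
  (((c m - c m.+1) / 2)%:E <=
   12%:R%:E * hGinv mu N rho (uphalf m)%:R * ((m%:R ^+ 2)^-1)%:E)%E.
Proof.
move=> m0; have m2 : 0 < m%:R ^+ 2 :> R by rewrite exprn_gt0 // ltr0n.
have := hGinv_ge0 (uphalf m).
case eH : (hGinv mu N rho (uphalf m)%:R) => [h| |] // h0; last first.
  by rewrite gt0_muley ?gt0_mulye ?leey // lte_fin ?invr_gt0 // ltr0n.
have hbound : (c m - c m.+1) / 2 * m%:R ^+ 2 <= 5 * h.
  apply/ler_addgt0Pr => e e0.
  have hr : ((uphalf m)%:R%:E < hG mu N rho (h + e / 5))%E.
    rewrite ltNge; apply/negP => hle.
    have : ((h + e / 5)%:E <= hGinv mu N rho (uphalf m)%:R)%E.
      by apply: ereal_sup_ubound; exists (h + e / 5).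
    by rewrite eH lee_fin gerDl lt_geF // divr_gt0.
  by have := @energy_qf_le_hG m _ m0 hr; lra.
rewrite -!EFinM lee_fin ler_pdivlMr //.
by move: h0; rewrite lee_fin; lra.
Qed.

End WeightedGraph.

Theorem proposition4p4 (R : realType) (V : choiceType)
  (mu : V -> V -> R) (N : V -> seq V) (rho : V) :
  is_wgraph mu N ->
  forall m : nat, (0 < m)%N ->
  forall x y : V,
    (((qker mu N m rho x - qker mu N m rho y) ^+ 2)%:E <=
     (12%:R)%:E * resist mu N x y * hGinv mu N rho (uphalf m)%:R
       * ((m%:R ^+ 2)^-1)%:E)%E.
Proof.
move=> HG m m0 x y; rewrite !(qker_qf _ _ _ _ HG).
have := resist_energy _ _ _ _ HG _ _ x y
  (energy_qf _ _ _ _ HG rho m) (energy_qf_ge0 _ _ _ _ HG rho m).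
move/le_trans; apply; rewrite (muleC 12%:R%:E) -!muleA.
apply: lee_wpmul2l; first exact: resist_ge0.
by rewrite !muleA; apply: energy_qf_le_hGinv.
Qed.
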